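(* Let $w\ge 1$ and $n\ge 1$ be integers and let $C\le \mathbb{F}_2^n$ be a linear subspace spanned by vectors of Hamming weight at most $w$, such that $\bigcup_{\boldsymbol{c}\in C}\operatorname{supp}(\boldsymbol{c})=[n]$. Then for every $0\le\lambda\le 1$, \[ Q_C(\lambda)\le\left(\frac{(1+\lambda)^w}{1+\lambda^w}\right)^{n/w}. \] Moreover, if $w=3$ then $Q_C(\lambda)\le (1+3\lambda)^{n/3}$ for every $0\le\lambda\le1$, and if $w=4$ then $Q_C(\lambda)\le (1+4\lambda+6\lambda^2)^{n/4}$ for every $0\le\lambda\le 1$.
   Context: For a finite set $U$ and a linear subspace $C\le\mathbb{F}_2^U$, the weight $w_{\mathrm H}(A)$ of a coset $A\in\mathbb{F}_2^U/C$ is the minimum Hamming weight of a vector in $A$. The coset-weight generating function of $C$ is $Q_C(\lambda)=\sum_{A\in\mathbb{F}_2^U/C}\lambda^{w_{\mathrm H}(A)}$ (with the convention $0^0=1$). For $\boldsymbol{c}\in\mathbb{F}_2^n$, $\operatorname{supp}(\boldsymbol{c})=\{i\in[n]:c_i=1\}$, and $[n]=\{1,\dots,n\}$. *)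

From HB Require Import structures.
From mathcomp Require Import all_boot all_order all_algebra.
From mathcomp Require Import all_classical all_reals all_analysis.
Set Implicit Arguments. Unset Strict Implicit. Unset Printing Implicit Defensive.
Import Order.TTheory GRing.Theory Num.Theory.
Local Open Scope ring_scope.

Definition hweight (n : nat) (v : 'rV['F_2]_n) : nat := #|[set i | v 0 i != 0]|.

Definition vset (n : nat) (C : {vspace 'rV['F_2]_n}) : {set 'rV['F_2]_n} :=
  [set c | c \in C].

Definition cosets (n : nat) (C : {vspace 'rV['F_2]_n}) : {set {set 'rV['F_2]_n}} :=
  [set [set x + c | c in vset C] | x : 'rV['F_2]_n].

(* weight of a coset: minimum Hamming weight of its elements
   (cosets are nonempty and every weight is <= n, so the seed n is harmless) *)
Definition coset_weight (n : nat) (A : {set 'rV['F_2]_n}) : nat :=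
  \big[minn/n]_(v in A) hweight v.

(* coset-weight generating function Q_C(lambda); note lambda ^+ 0 = 1 *)
Definition QC (R : realType) (n : nat) (C : {vspace 'rV['F_2]_n}) (l : R) : R :=
  \sum_(A in cosets C) l ^+ coset_weight A.

From HB Require Import structures.
From mathcomp Require Import all_boot all_order all_algebra.
From mathcomp Require Import all_classical all_reals all_analysis.
From mathcomp Require Import ring lra zify.
From mathcomp Require Import all_boot all_order all_algebra.
Set Implicit Arguments. Unset Strict Implicit. Unset Printing Implicit Defensive.
Import Order.TTheory GRing.Theory Num.Theory.
Local Open Scope ring_scope.

(* Let S(D) = \sum_x l^d(x, D), where d(x, D) is the Hamming distance from x to
   the subspace D; then S(D) = |D| Q_D(l). Build C from its generators one at a
   time. If g has s coordinates T outside the support of D, write x = v + 1_Z with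
   v vanishing on T and Z a subset of T: then d(x, D + <g>) = min(a + |Z|, b + s - |Z|)
   with a = d(v, D), b = d(v + g', D), g' = g off T, and |a - b| <= w - s. Hence a
   local bound  \sum_k C(s,k) l^min(a + k, b + s - k) <= B^s (l^a + l^b)  gives
   (1 + l)^s S(D + <g>) <= 2 B^s S(D), so by induction
   (1 + l)^|supp D| S(D) <= |D| (1 + l)^n B^|supp D|, and Q_C(l) <= B^n once every
   coordinate is covered. Pairing k with s - k proves the local bound for
   B^w = (1 + l)^w / (1 + l^w); for w = 3, 4 the values B^w = 1 + 3l and
   1 + 4l + 6l^2 are checked case by case. *)

Lemma F2_cases (a : 'F_2) : a = 0 \/ a = 1.
Proof. by case: a => -[|[|//]] ?; [left | right]; apply: val_inj. Qed.

Lemma addrr_F2mx m n (A : 'M['F_2]_(m, n)) : A + A = 0.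
Proof. by apply/matrixP => i j; rewrite !mxE addrr_pchar2 ?pchar_Fp. Qed.

Lemma addrrK_F2mx m n (A B : 'M['F_2]_(m, n)) : A + B + B = A.
Proof. by rewrite -addrA addrr_F2mx addr0. Qed.

Section Support.
Variable n : nat.
Notation V := 'rV['F_2]_n.
Implicit Types (u v x g a : V) (S Z : {set 'I_n}).

Definition supp v : {set 'I_n} := [set i | v 0 i != 0].
Definition indicator S : V := \row_i (i \in S)%:R.

Lemma hweightE v : hweight v = #|supp v|.
Proof. by []. Qed.

Lemma hweight_le_dim v : (hweight v <= n)%N.
Proof. by rewrite hweightE (leq_trans (max_card _)) ?card_ord. Qed.

Lemma suppD u v : supp (u + v) \subset supp u :|: supp v.
Proof.
apply/subsetP => i; rewrite !inE mxE.
by case: (F2_cases (u 0 i)) => ->; case: (F2_cases (v 0 i)) => ->.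
Qed.

Lemma hweightD u v : (hweight (u + v) <= hweight u + hweight v)%N.
Proof. by rewrite !hweightE (leq_trans (subset_leq_card (suppD u v))) ?leq_card_setU. Qed.

Lemma supp_disjointD S u v :
  [disjoint supp u & S] -> [disjoint supp v & S] -> [disjoint supp (u + v) & S].
Proof.
rewrite !disjoints_subset => uS vS.
by apply: subset_trans (suppD u v) _; rewrite subUset uS.
Qed.

Lemma supp_indicator S : supp (indicator S) = S.
Proof. by apply/setP => i; rewrite !inE mxE; case: (i \in S). Qed.

Lemma supp_add_indicator u Z :
  [disjoint supp u & Z] -> supp (u + indicator Z) = supp u :|: Z.
Proof.
move=> uZ; apply/setP => i; rewrite !inE !mxE.
have [iZ|iZ] /= := boolP (i \in Z); last by rewrite addr0 orbF.
have : i \notin supp u by rewrite (disjointFl uZ iZ).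
by rewrite inE negbK => /eqP ->; rewrite add0r orbT.
Qed.

Lemma hweight_add_indicator u Z :
  [disjoint supp u & Z] -> hweight (u + indicator Z) = (hweight u + #|Z|)%N.
Proof.
move=> uZ; rewrite !hweightE supp_add_indicator // cardsU.
by move: uZ; rewrite -setI_eq0 => /eqP ->; rewrite cards0 subn0.
Qed.

Lemma indicatorD_sub S Z : Z \subset S -> indicator Z + indicator S = indicator (S :\: Z).
Proof.
move=> ZS; apply/rowP => i; rewrite !mxE !inE.
by case iZ: (i \in Z); rewrite ?add0r // (subsetP ZS _ iZ) addrr_pchar2 ?pchar_Fp.
Qed.

Lemma disjoint_supp_restrict x S : [disjoint supp (x + indicator (supp x :&: S)) & S].
Proof.
rewrite disjoints_subset; apply/subsetP => i; rewrite !inE !mxE.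
case iS: (i \in S) => //; rewrite in_setI iS andbT inE.
by case: (F2_cases (x 0 i)) => ->.
Qed.

Lemma sum_split_restrict (M : nmodType) S (F : V -> M) :
  \sum_x F x =
  \sum_(v : V | [disjoint supp v & S]) \sum_(Z : {set 'I_n} | Z \subset S) F (v + indicator Z).
Proof.
rewrite pair_big_dep (reindex_onto (fun p : V * {set 'I_n} => p.1 + indicator p.2)
   (fun x => (x + indicator (supp x :&: S), supp x :&: S))) /=; last first.
  by move=> x _; rewrite addrrK_F2mx.
apply: eq_bigl => -[v Z] /=; apply/eqP/andP => [[<- <-] | [vS ZS]].
  by rewrite disjoint_supp_restrict subsetIr.
have -> : supp (v + indicator Z) :&: S = Z.
  rewrite supp_add_indicator; last exact: disjointWr ZS vS.
  by rewrite setIUl (disjoint_setI0 vS) set0U; apply/setIidPl.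
by rewrite addrrK_F2mx.
Qed.

Lemma sum_subsets_card (M : nmodType) S (h : nat -> M) :
  \sum_(Z : {set 'I_n} | Z \subset S) h #|Z| = \sum_(k < #|S|.+1) h k *+ 'C(#|S|, k).
Proof.
rewrite (partition_big (fun Z : {set 'I_n} => inord #|Z| : 'I_#|S|.+1) xpredT) //=.
apply: eq_bigr => k _; rewrite -cards_draws -sumr_const.
apply: eq_big => [Z | Z /andP [ZS /eqP <-]]; last first.
  by rewrite inordK // ltnS subset_leq_card.
rewrite !inE; case ZS: (Z \subset S) => //=.
have ZleS : (#|Z| < #|S|.+1)%N by rewrite ltnS subset_leq_card.
by apply/eqP/eqP => [<- | eZ]; [rewrite inordK | apply: val_inj; rewrite /= inordK].
Qed.

Lemma sum_subsets_expr (R : comPzSemiRingType) S (l : R) :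
  \sum_(Z : {set 'I_n} | Z \subset S) l ^+ #|Z| = (l + 1) ^+ #|S|.
Proof. by rewrite sum_subsets_card exprD1n. Qed.

Lemma disjoint_supp_cancel g S :
  S \subset supp g -> [disjoint supp (g + indicator S) & S].
Proof.
move=> Sg; rewrite disjoints_subset; apply/subsetP => i; rewrite !inE !mxE.
case iS: (i \in S) => //; move: (subsetP Sg i iS); rewrite inE.
by case: (F2_cases (g 0 i)) => ->.
Qed.

Lemma sum_disjoint_translate (M : nmodType) S a (F : V -> M) :
  [disjoint supp a & S] ->
  \sum_(v : V | [disjoint supp v & S]) F (v + a) =
  \sum_(v : V | [disjoint supp v & S]) F v.
Proof.
move=> aS; rewrite (reindex_inj (addIr a)) /=; apply: eq_big => [v | v _].
  apply/idP/idP => vS; last exact: supp_disjointD.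
  by rewrite -(addrrK_F2mx v a) supp_disjointD.
by rewrite addrrK_F2mx.
Qed.

End Support.

Section SubspaceDistance.
Variable n : nat.
Notation V := 'rV['F_2]_n.
Implicit Types (v x y g : V) (D : {vspace V}) (S Z : {set 'I_n}).

Definition coset D x : {set V} := [set x + c | c in vset D].
Definition hdist D x : nat := coset_weight (coset D x).

Lemma mem_coset D x c : c \in D -> x + c \in coset D x.
Proof. by move=> cD; apply/imsetP; exists c; rewrite ?inE. Qed.

Lemma coset_refl D x : x \in coset D x.
Proof. by rewrite -{1}[x]addr0 mem_coset ?mem0v. Qed.

Lemma hdist_le D x c : c \in D -> (hdist D x <= hweight (x + c))%N.
Proof.
move=> cD; rewrite /hdist /coset_weight -minEnat.
by have := bigmin_le_cond n (@hweight n) (mem_coset x cD).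
Qed.

Lemma hdist_attained D x : exists2 c, c \in D & hdist D x = hweight (x + c).
Proof.
have x_in := coset_refl D x.
rewrite /hdist /coset_weight -minEnat (bigmin_eq_arg n x _ _ x_in) => [|v _]; last first.
  exact: hweight_le_dim.
by case: arg_minP => // y /imsetP [c]; rewrite inE => cD -> _; exists c.
Qed.

Lemma hdist0 x : hdist 0%VS x = hweight x.
Proof.
have [c] := hdist_attained 0%VS x.
by rewrite memv0 => /eqP -> ->; rewrite addr0.
Qed.

Lemma hdist_addr_le D x y : (hdist D (x + y) <= hdist D x + hweight y)%N.
Proof.
have [c cD ->] := hdist_attained D x.
by rewrite (leq_trans (hdist_le _ cD)) // addrAC hweightD.
Qed.

Lemma hdist_addv_line D g x :
  hdist (<[g]> + D)%VS x = minn (hdist D x) (hdist D (x + g)).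
Proof.
apply/eqP; rewrite eqn_leq leq_min -andbA; apply/and3P; split.
- have [c cD ->] := hdist_attained D x.
  by apply: hdist_le; rewrite -[c]add0r memv_add ?mem0v.
- have [c cD ->] := hdist_attained D (x + g).
  by rewrite -addrA; apply: hdist_le; rewrite memv_add ?memv_line.
- have [y /memv_addP [_ /vlineP [k ->] [c cD ->]] ->] := hdist_attained (<[g]> + D)%VS x.
  have [->|->] := F2_cases k; first by rewrite scale0r add0r geq_min hdist_le.
  by rewrite scale1r addrA geq_min hdist_le ?orbT.
Qed.

Lemma hdist_add_indicator D S v Z :
  (forall c, c \in D -> [disjoint supp c & S]) -> [disjoint supp v & S] ->
  Z \subset S -> hdist D (v + indicator Z) = (hdist D v + #|Z|)%N.
Proof.
move=> DS vS ZS.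
have hweight_shift c : c \in D -> hweight (v + indicator Z + c) = (hweight (v + c) + #|Z|)%N.
  move=> cD; rewrite addrAC hweight_add_indicator //.
  exact: disjointWr ZS (supp_disjointD vS (DS c cD)).
apply/eqP; rewrite eqn_leq; apply/andP; split.
  by have [c cD ->] := hdist_attained D v; rewrite -hweight_shift // hdist_le.
have [c cD ->] := hdist_attained D (v + indicator Z).
by rewrite hweight_shift // leq_add2r hdist_le.
Qed.

Lemma coset_eqE D x y : (coset D x == coset D y) = (x \in coset D y).
Proof.
apply/eqP/idP => [<- | /imsetP [c]]; first exact: coset_refl.
rewrite inE => cD ->; apply/setP => z; apply/imsetP/imsetP => -[c']; rewrite inE => c'D ->.
  by exists (c + c'); rewrite ?inE ?memvD ?addrA.
by exists (c + c'); rewrite ?inE ?memvD // addrA addrrK_F2mx.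
Qed.

Lemma card_coset D x : #|coset D x| = #|vset D|.
Proof. exact/card_imset/addrI. Qed.

Lemma card_vset_gt0 D : (0 < #|vset D|)%N.
Proof. by apply/card_gt0P; exists 0; rewrite inE mem0v. Qed.

Definition vsupp D : {set 'I_n} := [set i | [exists c : V, (c \in D) && (c 0 i != 0)]].

Lemma vsupp_disjoint D c : c \in D -> [disjoint supp c & ~: vsupp D].
Proof.
move=> cD; rewrite disjoints_subset setCK; apply/subsetP => i; rewrite !inE => ci.
by apply/existsP; exists c; rewrite cD.
Qed.

Lemma vsupp0 : vsupp 0%VS = set0.
Proof.
apply/setP => i; rewrite !inE; apply/existsP => -[c].
by rewrite memv0 => /andP [/eqP -> ]; rewrite mxE eqxx.
Qed.

Lemma vsupp_addv_line D g : vsupp (<[g]> + D)%VS = vsupp D :|: supp g.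
Proof.
apply/setP => i; rewrite !inE; apply/existsP/orP.
  move=> [_ /andP [/memv_addP [_ /vlineP [k ->] [c cD ->]]]]; rewrite !mxE.
  have [gi|gi] := eqVneq (g 0 i) 0; last by right.
  by rewrite gi mulr0 add0r => ci; left; apply/existsP; exists c; rewrite cD.
case=> [/existsP [c /andP [cD ci]] | gi].
  by exists c; rewrite ci andbT -[c]add0r memv_add ?mem0v.
by exists g; rewrite gi andbT; have := memv_add (memv_line g) (mem0v D); rewrite addr0.
Qed.

Lemma card_vsupp_addv_line D g :
  #|vsupp (<[g]> + D)%VS| = (#|vsupp D| + #|supp g :\: vsupp D|)%N.
Proof.
by rewrite vsupp_addv_line cardsU cardsD [supp g :&: _]setIC addnBA ?subset_leq_card ?subsetIr.
Qed.

Lemma vsupp_full D : (forall i, exists2 c : V, c \in D & c 0 i != 0) -> vsupp D = setT.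
Proof.
move=> covered; apply/setP => i; rewrite !inE.
by have [c cD ci] := covered i; apply/existsP; exists c; rewrite cD.
Qed.

Lemma card_vset_addv_line D g : g \notin D ->
  #|vset (<[g]> + D)%VS| = (#|vset D| + #|vset D|)%N.
Proof.
move=> gD.
have -> : vset (<[g]> + D)%VS = vset D :|: coset D g.
  apply/setP => x; rewrite !inE; apply/idP/orP => [ | [xD | /imsetP [c]]].
  - move=> /memv_addP [_ /vlineP [k ->] [c cD ->]].
    have [->|->] := F2_cases k; first by rewrite scale0r add0r cD; left.
    by rewrite scale1r; right; apply: mem_coset.
  - by rewrite -[x]add0r memv_add ?mem0v.
  - by rewrite inE => cD ->; rewrite memv_add ?memv_line.
rewrite cardsU card_imset; last exact: addrI.
suff -> : vset D :&: coset D g = set0 by rewrite cards0 subn0.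
apply/setP => x; rewrite !inE; apply/andP => -[xD /imsetP [c]].
rewrite inE => cD ex; case/negP: gD.
by rewrite -(addrrK_F2mx g c) -ex memvD.
Qed.

End SubspaceDistance.

Definition local_bound (R : numDomainType) (l B : R) (w : nat) :=
  forall s a b, (s <= w)%N -> (a <= b + (w - s))%N -> (b <= a + (w - s))%N ->
  \sum_(k < s.+1) l ^+ minn (a + k) (b + (s - k)) *+ 'C(s, k) <= B ^+ s * (l ^+ a + l ^+ b).

Section WeightSum.
Variables (R : numDomainType) (l : R) (n : nat).
Hypothesis l_ge0 : 0 <= l.
Notation V := 'rV['F_2]_n.
Implicit Types (v x g : V) (D : {vspace V}) (S Z : {set 'I_n}).

Definition wsum D : R := \sum_(x : V) l ^+ hdist D x.

Lemma wsum0 : wsum 0%VS = (l + 1) ^+ n.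
Proof.
rewrite /wsum (sum_split_restrict [set: 'I_n]) (big_pred1 0) => [|v]; last first.
  rewrite /= disjoints_subset setCT subset0; apply/eqP/eqP => [vT | ->].
    apply/rowP => i; have : i \notin supp v by rewrite vT inE.
    by rewrite inE negbK mxE => /eqP.
  by apply/setP => i; rewrite !inE mxE eqxx.
transitivity ((l + 1) ^+ #|[set: 'I_n]|); last by rewrite cardsT card_ord.
rewrite -sum_subsets_expr; apply: eq_bigr => Z _.
by rewrite add0r hdist0 hweightE supp_indicator.
Qed.

Lemma hdist_addv_line_split D S a v Z :
  (forall c, c \in D -> [disjoint supp c & S]) -> [disjoint supp a & S] ->
  [disjoint supp v & S] -> Z \subset S ->
  hdist (<[a + indicator S]> + D)%VS (v + indicator Z) =
    minn (hdist D v + #|Z|) (hdist D (v + a) + (#|S| - #|Z|)).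
Proof.
move=> DS aS vS ZS; rewrite hdist_addv_line (hdist_add_indicator DS) //.
rewrite addrACA (indicatorD_sub ZS) (hdist_add_indicator DS) ?subsetDl ?supp_disjointD //.
by rewrite cardsD (setIidPr ZS).
Qed.

Lemma wsum_free_coords D S : (forall c, c \in D -> [disjoint supp c & S]) ->
  wsum D = (l + 1) ^+ #|S| * \sum_(v : V | [disjoint supp v & S]) l ^+ hdist D v.
Proof.
move=> DS; rewrite /wsum (sum_split_restrict S) mulr_sumr; apply: eq_bigr => v vS.
rewrite -sum_subsets_expr mulr_suml; apply: eq_bigr => Z ZS.
by rewrite (hdist_add_indicator DS) // exprD mulrC.
Qed.

Variables (B : R) (w : nat).
Hypothesis B_ge0 : 0 <= B.
Hypothesis Hloc : local_bound l B w.

Lemma wsum_addv_line_le D S a :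
  (forall c, c \in D -> [disjoint supp c & S]) -> [disjoint supp a & S] ->
  (hweight a + #|S| <= w)%N ->
  (l + 1) ^+ #|S| * wsum (<[a + indicator S]> + D)%VS <= 2 * B ^+ #|S| * wsum D.
Proof.
move=> DS aS aSw; set s := #|S|.
have a_le : (hweight a <= w - s)%N by lia.
have bnd1 v : (hdist D v <= hdist D (v + a) + (w - s))%N.
  by rewrite -{1}(addrrK_F2mx v a) (leq_trans (hdist_addr_le _ _ _)) ?leq_add2l.
have bnd2 v : (hdist D (v + a) <= hdist D v + (w - s))%N.
  by rewrite (leq_trans (hdist_addr_le _ _ _)) ?leq_add2l.
have sw : (s <= w)%N by lia.
have -> : wsum (<[a + indicator S]> + D)%VS = \sum_(v : V | [disjoint supp v & S])
    \sum_(k < s.+1) l ^+ minn (hdist D v + k) (hdist D (v + a) + (s - k)) *+ 'C(s, k).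
  rewrite /wsum (sum_split_restrict S); apply: eq_bigr => v vS.
  rewrite -(sum_subsets_card S (fun k => l ^+ minn (hdist D v + k) (hdist D (v + a) + (s - k)))).
  by apply: eq_bigr => Z ZS; rewrite hdist_addv_line_split.
rewrite (wsum_free_coords DS) mulrCA ler_wpM2l ?exprn_ge0 ?addr_ge0 //.
apply: le_trans (ler_sum _ (fun v _ => Hloc sw (bnd1 v) (bnd2 v))) _.
rewrite -mulr_sumr big_split /= (sum_disjoint_translate (fun v => l ^+ hdist D v) aS).
by rewrite -mulr2n mulrnAr -mulr_natl mulrA.
Qed.

Lemma wsum_span_le Sg : all (fun v => hweight v <= w)%N Sg ->
  (l + 1) ^+ #|vsupp <<Sg>>%VS| * wsum <<Sg>>%VS
    <= #|vset <<Sg>>%VS|%:R * (l + 1) ^+ n * B ^+ #|vsupp <<Sg>>%VS|.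
Proof.
have L_ge0 : 0 <= l + 1 by rewrite addr_ge0.
elim: Sg => [_ | g Sg IH /= /andP [gw /IH {}IH]].
  rewrite span_nil wsum0 vsupp0 cards0 !mulr1 mul1r.
  have -> : vset (0%VS : {vspace V}) = [set 0] by apply/setP => x; rewrite !inE memv0.
  by rewrite cards1 mul1r.
rewrite span_cons; set D := <<Sg>>%VS in IH *.
have [gD | gD] := boolP (g \in D); first by move: gD; rewrite memvE => /addv_idPr ->.
set S := supp g :\: vsupp D.
have DS c : c \in D -> [disjoint supp c & S].
  by move=> cD; apply: disjointWr (vsupp_disjoint cD); rewrite /S setDE subsetIr.
have aS := disjoint_supp_cancel (subsetDl (supp g) (vsupp D)).
have ga : g = g + indicator S + indicator S by rewrite addrrK_F2mx.
have aSw : (hweight (g + indicator S) + #|S| <= w)%N by rewrite -hweight_add_indicator // -ga.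
have step := wsum_addv_line_le DS aS aSw; rewrite -ga in step.
rewrite card_vset_addv_line // card_vsupp_addv_line -/S !exprD -mulrA.
apply: le_trans (ler_wpM2l (exprn_ge0 _ L_ge0) step) _.
rewrite mulrCA; apply: le_trans (ler_wpM2l (mulr_ge0 _ (exprn_ge0 _ B_ge0)) IH) _ => //.
(* Generalizing the cardinals keeps ring from trying to evaluate them. *)
rewrite natrD; move: (#|vset D|%:R : R) (B ^+ #|S|) (B ^+ #|vsupp D|) => d Bs Bc.
by rewrite le_eqVlt; apply/orP; left; apply/eqP; ring.
Qed.

End WeightSum.

Lemma QC_wsum (R : realType) n (D : {vspace 'rV['F_2]_n}) (l : R) :
  QC D l = wsum l D / #|vset D|%:R.
Proof.
rewrite /QC /wsum (partition_big (coset D) (mem (cosets D))) => [|x _]; last first.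
  by apply/imsetP; exists x.
rewrite mulr_suml; apply: eq_bigr => _ /imsetP [y _ ->].
transitivity ((\sum_(x in coset D y) l ^+ coset_weight (coset D y)) / #|vset D|%:R).
  rewrite sumr_const card_coset -[_ *+ #|vset D|]mulr_natl mulrAC divff ?mul1r //.
  by rewrite pnatr_eq0 -lt0n card_vset_gt0.
congr (_ / _); apply: eq_big => [x | x]; first by rewrite coset_eqE.
by rewrite -coset_eqE => /eqP xy; rewrite /hdist xy.
Qed.

Lemma QC_le_local_bound (R : realType) (w n : nat) (Sg : seq 'rV['F_2]_n) (l B : R) :
  0 <= l -> 0 <= B -> local_bound l B w -> all (fun v => hweight v <= w)%N Sg ->
  vsupp <<Sg>>%VS = setT -> QC <<Sg>>%VS l <= B ^+ n.
Proof.
move=> l_ge0 B_ge0 Hloc Sgw full.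
have := wsum_span_le l_ge0 B_ge0 Hloc Sgw.
rewrite full cardsT card_ord -mulrA mulrCA ler_pM2l ?exprn_gt0 ?ltr_wpDl // => wsum_le.
by rewrite QC_wsum ler_pdivrMr ?ltr0n ?card_vset_gt0 // mulrC.
Qed.

Lemma sum_binomial_rev (M : nmodType) s (F : nat -> M) :
  \sum_(k < s.+1) F k *+ 'C(s, k) = \sum_(k < s.+1) F (s - k)%N *+ 'C(s, k).
Proof.
rewrite (reindex_inj rev_ord_inj) /=; apply: eq_bigr => k _.
by rewrite subSS bin_sub // -ltnS.
Qed.

Lemma ler_of_exprn (R : realDomainType) (m s : nat) (T Y B : R) :
  (0 < m)%N -> 0 <= T -> 0 <= Y -> 0 <= B ->
  T ^+ m <= (B ^+ m) ^+ s * Y ^+ m -> T <= B ^+ s * Y.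
Proof.
move=> m_gt0 T_ge0 Y_ge0 B_ge0.
by rewrite -exprM mulnC exprM -exprMn ler_pXn2r // nnegrE mulr_ge0 ?exprn_ge0.
Qed.

Section LocalBound.
Variables (R : realFieldType) (l : R).
Hypotheses (l_ge0 : 0 <= l) (l_le1 : l <= 1).

Let lerXn m k : (m <= k)%N -> l ^+ k <= l ^+ m.
Proof. exact: ler_wiXn2l. Qed.

Lemma expr_min_add_max p t : l ^+ minn p t + l ^+ maxn p t = l ^+ p + l ^+ t.
Proof. by have [] := leqP p t; rewrite // addrC. Qed.

Lemma expr_min2_le w p t q r :
  (maxn q r <= w + minn p t)%N -> (maxn p t <= w + minn q r)%N ->
  (1 + l ^+ w) * (l ^+ minn p t + l ^+ minn q r) <= l ^+ p + l ^+ t + (l ^+ q + l ^+ r).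
Proof.
move=> qr_le pt_le; rewrite -(expr_min_add_max p t) -(expr_min_add_max q r).
by have := lerXn qr_le; have := lerXn pt_le; rewrite !exprD; lra.
Qed.

Lemma expr_min_pair_le w s a b k :
  (s <= w)%N -> (a <= b + w)%N -> (b <= a + w)%N -> (k <= s)%N ->
  (1 + l ^+ w) * (l ^+ minn (a + k) (b + (s - k)) + l ^+ minn (a + (s - k)) (b + k))
    <= (l ^+ a + l ^+ b) * (l ^+ k + l ^+ (s - k)).
Proof.
move=> sw ab ba ks.
have -> : (l ^+ a + l ^+ b) * (l ^+ k + l ^+ (s - k)) =
    l ^+ (a + k) + l ^+ (b + (s - k)) + (l ^+ (a + (s - k)) + l ^+ (b + k)).
  by rewrite !exprD; ring.
by apply: expr_min2_le; lia.
Qed.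

Lemma sum_expr_min_binomial_le w s a b :
  (s <= w)%N -> (a <= b + w)%N -> (b <= a + w)%N ->
  (1 + l ^+ w) * \sum_(k < s.+1) l ^+ minn (a + k) (b + (s - k)) *+ 'C(s, k)
    <= (l + 1) ^+ s * (l ^+ a + l ^+ b).
Proof.
move=> sw ab ba; set X := \sum_(k < s.+1) _.
have X_rev : X = \sum_(k < s.+1) l ^+ minn (a + (s - k)) (b + k) *+ 'C(s, k).
  rewrite /X (sum_binomial_rev s (fun k => l ^+ minn (a + k) (b + (s - k)))).
  by apply: eq_bigr => k _; rewrite subKn ?leq_ord.
have binom_rev : \sum_(k < s.+1) l ^+ (s - k) *+ 'C(s, k) = (l + 1) ^+ s.
  by rewrite -(sum_binomial_rev s (fun k => l ^+ k)) exprD1n.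
suff : (1 + l ^+ w) * (X + X) <= (l ^+ a + l ^+ b) * ((l + 1) ^+ s + (l + 1) ^+ s).
  by rewrite !mulrDr mulrC; lra.
rewrite {2}X_rev -{2}binom_rev {1}exprD1n -!big_split !mulr_sumr; apply: ler_sum => k _.
by rewrite /= -!mulrnDl !mulrnAr ler_wMn2r // expr_min_pair_le ?leq_ord.
Qed.

Lemma local_bound_binomial (B : R) w : (0 < w)%N -> 0 <= B ->
  B ^+ w = (1 + l) ^+ w / (1 + l ^+ w) -> local_bound l B w.
Proof.
move=> w_gt0 B_ge0 Bw s a b sw h1 h2.
have den_gt0 : 0 < 1 + l ^+ w by rewrite ltr_pwDl ?exprn_ge0.
have binom_le : (l + 1) ^+ s <= B ^+ s * (1 + l ^+ w).
  apply: (ler_of_exprn w_gt0); [by rewrite exprn_ge0 ?addr_ge0 | exact: ltW | done |].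
  have -> : (1 + l ^+ w) ^+ w = (1 + l ^+ w) ^+ s * (1 + l ^+ w) ^+ (w - s).
    by rewrite -exprD subnKC.
  rewrite Bw expr_div_n -!exprM mulnC addrC mulrA divfK; last first.
    by rewrite expf_neq0 // gt_eqF.
  by rewrite ler_peMr ?exprn_ege1 ?exprn_ge0 ?addr_ge0 // lerDl exprn_ge0.
rewrite -(ler_pM2l den_gt0).
apply: le_trans (sum_expr_min_binomial_le sw _ _) _; try lia.
by rewrite mulrA [_ * B ^+ s]mulrC; apply: ler_wpM2r binom_le; rewrite addr_ge0 ?exprn_ge0.
Qed.

Lemma local_bound_shift (B : R) w :
  (forall s d, (s + d <= w)%N ->
     \sum_(k < s.+1) l ^+ minn k (d + (s - k)) *+ 'C(s, k) <= B ^+ s * (1 + l ^+ d)) ->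
  local_bound l B w.
Proof.
move=> Hd s a b sw; wlog ab : a b / (a <= b)%N.
  move=> Hw h1 h2; have [ab|ba] := leqP a b; first exact: Hw ab h1 h2.
  rewrite (sum_binomial_rev s (fun k => l ^+ minn (a + k) (b + (s - k)))) addrC.
  under eq_bigr => k _ do rewrite subKn ?leq_ord // minnC.
  exact: Hw (ltnW ba) h2 h1.
move=> h1 h2; rewrite -(subnKC ab); set d := (b - a)%N.
under eq_bigr => k _ do rewrite -addnA -addn_minr exprD -mulrnAr.
have -> : l ^+ a + l ^+ (a + d) = l ^+ a * (1 + l ^+ d) by rewrite exprD mulrDr mulr1.
rewrite -mulr_sumr mulrCA ler_wpM2l ?exprn_ge0 //.
by apply: Hd; lia.
Qed.

Lemma local_bound3 (B : R) : 0 <= B -> B ^+ 3 = 1 + 3 * l -> local_bound l B 3.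
Proof.
move=> B_ge0 B3.
have lX_ge0 k : 0 <= l ^+ k by rewrite exprn_ge0.
have lX_le k : l ^+ k.+1 <= l ^+ k := ler_wiXn2l l_ge0 l_le1 (leqnSn k).
move: (lX_ge0 2) (lX_ge0 3) (lX_ge0 4) (lX_ge0 5) (lX_ge0 6) (lX_ge0 7) (lX_ge0 8) (lX_ge0 9)
  (lX_le 1) (lX_le 2); intros.
have C32 : 'C(3, 2) = 3%N by [].
apply: local_bound_shift => s d.
(* After cubing, each case compares two polynomials in l; lra does so using the
   facts about the monomials l^k put in the context above. *)
case: s => [|[|[|[|s]]]]; case: d => [|[|[|[|d]]]] //= sd;
  rewrite !big_ord_recr big_ord0 /= /minn /= ?bin0 ?binn ?bin1 /addn /subn /= ?C32;
  apply: (ler_of_exprn (isT : (0 < 3)%N)); rewrite ?B3; lra.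
Qed.

Lemma local_bound4 (B : R) : 0 <= B -> B ^+ 4 = 1 + 4 * l + 6 * l ^+ 2 -> local_bound l B 4.
Proof.
move=> B_ge0 B4.
have lX_ge0 k : 0 <= l ^+ k by rewrite exprn_ge0.
move: (lX_ge0 1) (lX_ge0 2) (lX_ge0 3) (lX_ge0 4) (lX_ge0 5) (lX_ge0 6) (lX_ge0 7) (lX_ge0 8)
  (lX_ge0 9) (lX_ge0 10) (lX_ge0 11) (lX_ge0 12) (lX_ge0 13) (lX_ge0 14) (lX_ge0 15)
  (lX_ge0 16); intros.
have [C32 C42 C43] : [/\ 'C(3, 2) = 3, 'C(4, 2) = 6 & 'C(4, 3) = 4]%N by [].
apply: local_bound_shift => s d.
case: s => [|[|[|[|[|s]]]]]; case: d => [|[|[|[|[|d]]]]] //= sd;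
  rewrite !big_ord_recr big_ord0 /= /minn /= ?bin0 ?binn ?bin1 /addn /subn /= ?C32 ?C42 ?C43;
  apply: (ler_of_exprn (isT : (0 < 4)%N)); rewrite ?B4; lra.
Qed.
End LocalBound.

Lemma powR_invn_exprn (R : realType) (x : R) (w m : nat) :
  0 <= x -> (x `^ w%:R^-1) ^+ m = x `^ (m%:R / w%:R).
Proof. by move=> x_ge0; rewrite -powR_mulrn ?powR_ge0 // -powRrM mulrC. Qed.

Lemma powR_invnK (R : realType) (x : R) (w : nat) :
  0 <= x -> (0 < w)%N -> (x `^ w%:R^-1) ^+ w = x.
Proof. by move=> x_ge0 w_gt0; rewrite powR_invn_exprn // divff ?powRr1 // pnatr_eq0 -lt0n. Qed.

Theorem theorem3 (R : realType) (w n : nat) (C : {vspace 'rV['F_2]_n}) :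
  (1 <= w)%N -> (1 <= n)%N ->
  (exists S : seq 'rV['F_2]_n,
      all (fun v => (hweight v <= w)%N) S /\ C = <<S>>%VS) ->
  (forall i : 'I_n, exists2 c : 'rV['F_2]_n, c \in C & c 0 i != 0) ->
  forall l : R, 0 <= l <= 1 ->
    [/\ QC C l <= (((1 + l) ^+ w) / (1 + l ^+ w)) `^ (n%:R / w%:R),
        (w = 3%N -> QC C l <= (1 + 3 * l) `^ (n%:R / 3)) &
        (w = 4%N -> QC C l <= (1 + 4 * l + 6 * l ^+ 2) `^ (n%:R / 4))].
Proof.
move=> w_gt0 _ [Sg [Sgw ->]] /vsupp_full full l /andP [l_ge0 l_le1].
have QC_le_root x : 0 <= x -> local_bound l (x `^ w%:R^-1) w ->
    QC <<Sg>>%VS l <= x `^ (n%:R / w%:R).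
  move=> x_ge0 Hloc; rewrite -powR_invn_exprn //.
  exact: QC_le_local_bound (powR_ge0 _ _) Hloc Sgw full.
split=> [|w3|w4].
- have x_ge0 : 0 <= (1 + l) ^+ w / (1 + l ^+ w).
    by rewrite divr_ge0 ?exprn_ge0 ?addr_ge0 ?exprn_ge0.
  by apply: (QC_le_root _ x_ge0); apply: local_bound_binomial; rewrite ?powR_ge0 ?powR_invnK.
- subst w; have x_ge0 : 0 <= 1 + 3 * l by rewrite addr_ge0 ?mulr_ge0.
  by apply: (QC_le_root _ x_ge0); apply: local_bound3; rewrite ?powR_ge0 ?powR_invnK.
- subst w; have x_ge0 : 0 <= 1 + 4 * l + 6 * l ^+ 2.
    by rewrite !addr_ge0 ?mulr_ge0 ?exprn_ge0.
  by apply: (QC_le_root _ x_ge0); apply: local_bound4; rewrite ?powR_ge0 ?powR_invnK.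
Qed.
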